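(* For every closed de Bruijn term $t'$, every term $t$ and environment $e$, in the AB machine we have $\langle 0, \epsilon, (t, e)\rangle_{\mathrm{ind}} \xrightarrow{\mathrm{Seq}(t')} \langle t, (t', \varepsilon) :: e, []\rangle_{\mathrm{ev}}$, i.e., the machine performs successively the flagged transitions listed in $\mathrm{Seq}(t')$ and reaches that configuration.
   Context: De Bruijn terms $t,s ::= n \mid t\,s \mid \lambda.t$ ($n\in\mathbb N$); closures $\sigma ::= (t,e)$; environments $e ::= \sigma :: e \mid \varepsilon$; stacks $\pi ::= \sigma::\pi \mid []$; application stacks $\rho ::= (t,\kappa)::\rho \mid \epsilon$ with $\kappa\in\mathbb N$. A term is closed if it has no free de Bruijn indices. AB machine configurations: $\langle t, e, \pi\rangle_{\mathrm{ev}}$, $\langle n, \rho, \sigma\rangle_{\mathrm{ind}}$, $\langle t, \kappa, \rho, \sigma\rangle_{\mathrm{tm}}$. Transitions: $\langle t\,s, e, \pi\rangle_{\mathrm{ev}} \xrightarrow\tau \langle t, e, (s,e)::\pi\rangle_{\mathrm{ev}}$; $\langle 0, (t,e)::d, \pi\rangle_{\mathrm{ev}}\xrightarrow\tau\langle t,e,\pi\rangle_{\mathrm{ev}}$; $\langle n+1, (t,e)::d,\pi\rangle_{\mathrm{ev}} \xrightarrow\tau\langle n, d,\pi\rangle_{\mathrm{ev}}$; $\langle\lambda.t, e, \sigma::\pi\rangle_{\mathrm{ev}} \xrightarrow\tau \langle t, \sigma::e,\pi\rangle_{\mathrm{ev}}$; $\langle \lambda.t, e, []\rangle_{\mathrm{ev}}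 \xrightarrow{\mathsf{arg}} \langle 0, \epsilon, (t,e)\rangle_{\mathrm{ind}}$; $\langle n,\rho,\sigma\rangle_{\mathrm{ind}}\xrightarrow{\mathsf{suc}}\langle n+1,\rho,\sigma\rangle_{\mathrm{ind}}$; $\langle n,\rho,\sigma\rangle_{\mathrm{ind}}\xrightarrow{\mathsf{var}}\langle n, n+1,\rho,\sigma\rangle_{\mathrm{tm}}$; $\langle t,\kappa+1,\rho,\sigma\rangle_{\mathrm{tm}}\xrightarrow{\mathsf{lam}}\langle\lambda.t,\kappa,\rho,\sigma\rangle_{\mathrm{tm}}$; $\langle t,0,\rho,\sigma\rangle_{\mathrm{tm}}\xrightarrow{\mathsf{lam}}\langle\lambda.t,0,\rho,\sigma\rangle_{\mathrm{tm}}$; $\langle t,\kappa,\rho,\sigma\rangle_{\mathrm{tm}}\xrightarrow{\mathsf{appfun}}\langle 0, (t,\kappa)::\rho,\sigma\rangle_{\mathrm{ind}}$; $\langle s,\kappa_1,(t,\kappa_2)::\rho,\sigma\rangle_{\mathrm{tm}}\xrightarrow{\mathsf{app}}\langle t\,s,\max(\kappa_1,\kappa_2),\rho,\sigma\rangle_{\mathrm{tm}}$; $\langle t, 0, \epsilon, (s,e)\rangle_{\mathrm{tm}}\xrightarrow{\mathsf{done}}\langle s, (t,\varepsilon)::e, []\rangle_{\mathrm{ev}}$. Flag sequences (concatenation of sequences written by nesting): $\mathrm{Seq}(t) = (\mathrm{Seq}'(t), \mathsf{done})$; $\mathrm{Seq}'(t\,s) = (\mathrm{Seq}'(t), \mathsf{appfun},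 \mathrm{Seq}'(s), \mathsf{app})$; $\mathrm{Seq}'(\lambda.t) = (\mathrm{Seq}'(t), \mathsf{lam})$; $\mathrm{Seq}'(n) = (\mathrm{Seq}_{\mathrm{int}}(n), \mathsf{var})$; $\mathrm{Seq}_{\mathrm{int}}(0) = ()$; $\mathrm{Seq}_{\mathrm{int}}(n+1) = (\mathrm{Seq}_{\mathrm{int}}(n), \mathsf{suc})$. $C\xrightarrow{(F_1,\dots,F_m)}C'$ means $C\xrightarrow{F_1}\cdots\xrightarrow{F_m}C'$. *)

From Stdlib Require Import List Arith.
Import ListNotations.

Inductive term : Type :=
| Var : nat -> term
| App : term -> term -> term
| Lam : term -> term.

Inductive clos : Type := Clos : term -> list clos -> clos.
Definition env := list clos.
Definition stack := list clos.
Definition astack := list (term * nat).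

Fixpoint closedAt (k : nat) (t : term) : Prop :=
  match t with
  | Var n => n < k
  | App t s => closedAt k t /\ closedAt k s
  | Lam t => closedAt (S k) t
  end.
Definition closed (t : term) : Prop := closedAt 0 t.

Inductive config : Type :=
| Ev  : term -> env -> stack -> config
| Ind : nat -> astack -> clos -> config
| Tm  : term -> nat -> astack -> clos -> config.

Inductive flag : Type :=
| Tau | Arg | Suc | FVar | FLam | AppFun | FApp | Done.

Inductive step : config -> flag -> config -> Prop :=
| st_app : forall t s e p, step (Ev (App t s) e p) Tau (Ev t e (Clos s e :: p))
| st_var0 : forall t e d p, step (Ev (Var 0) (Clos t e :: d) p) Tau (Ev t e p)
| st_varS : forall n t e d p, step (Ev (Var (S n)) (Clos t e :: d) p) Tau (Ev (Var n) d p)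
| st_beta : forall t e sg p, step (Ev (Lam t) e (sg :: p)) Tau (Ev t (sg :: e) p)
| st_arg : forall t e, step (Ev (Lam t) e []) Arg (Ind 0 [] (Clos t e))
| st_suc : forall n r sg, step (Ind n r sg) Suc (Ind (S n) r sg)
| st_fvar : forall n r sg, step (Ind n r sg) FVar (Tm (Var n) (S n) r sg)
| st_lamS : forall t k r sg, step (Tm t (S k) r sg) FLam (Tm (Lam t) k r sg)
| st_lam0 : forall t r sg, step (Tm t 0 r sg) FLam (Tm (Lam t) 0 r sg)
| st_appfun : forall t k r sg, step (Tm t k r sg) AppFun (Ind 0 ((t, k) :: r) sg)
| st_fapp : forall s k1 t k2 r sg,
    step (Tm s k1 ((t, k2) :: r) sg) FApp (Tm (App t s) (Nat.max k1 k2) r sg)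
| st_done : forall t s e, step (Tm t 0 [] (Clos s e)) Done (Ev s (Clos t [] :: e) []).

Inductive steps : config -> list flag -> config -> Prop :=
| steps_nil : forall c, steps c [] c
| steps_cons : forall c f c' fs c'', step c f c' -> steps c' fs c'' -> steps c (f :: fs) c''.

Fixpoint seq_int (n : nat) : list flag :=
  match n with 0 => [] | S n => seq_int n ++ [Suc] end.

Fixpoint seq' (t : term) : list flag :=
  match t with
  | App t s => seq' t ++ [AppFun] ++ seq' s ++ [FApp]
  | Lam t => seq' t ++ [FLam]
  | Var n => seq_int n ++ [FVar]
  end.

Definition seqF (t : term) : list flag := seq' t ++ [Done].

(* Running Seq'(t) from an index configuration rebuilds t bottom-up on the
   term side of the machine, ending in <t, k, rho, sigma>_tm where the counter
   k is the number of binders still needed to close t.  For a closed term this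
   counter is 0, which is exactly what the final done transition requires. *)

From Stdlib Require Import List Lia.
Import ListNotations.

(* The least [k] with [closedAt k t]; it is the counter kappa of the machine. *)
Fixpoint binders_needed (t : term) : nat :=
  match t with
  | Var n => S n
  | Lam t => pred (binders_needed t)
  | App t s => Nat.max (binders_needed s) (binders_needed t)
  end.

Lemma binders_needed_le (t : term) (k : nat) :
  closedAt k t -> binders_needed t <= k.
Proof.
  revert k; induction t as [n | t IHt s IHs | t IHt]; simpl; intros k Hk.
  - exact Hk.
  - destruct Hk as [Ht Hs].
    apply IHt in Ht; apply IHs in Hs; lia.
  - apply IHt in Hk; lia.
Qed.

Lemma closed_binders_needed (t : term) : closed t -> binders_needed t = 0.
Proof. intros Ht; apply binders_needed_le in Ht; lia. Qed.

Lemma steps_cat (c : config) (fs : list flag) (c' : config) (gs : list flag)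
    (c'' : config) :
  steps c fs c' -> steps c' gs c'' -> steps c (fs ++ gs) c''.
Proof.
  induction 1 as [| c f c1 fs c2 Hstep _ IH]; intros Hgs; simpl.
  - exact Hgs.
  - exact (steps_cons _ _ _ _ _ Hstep (IH Hgs)).
Qed.

Lemma steps_one (c : config) (f : flag) (c' : config) :
  step c f c' -> steps c [f] c'.
Proof. intros Hstep; exact (steps_cons _ _ _ _ _ Hstep (steps_nil c')). Qed.

Lemma steps_seq_int (n : nat) (r : astack) (sg : clos) :
  steps (Ind 0 r sg) (seq_int n) (Ind n r sg).
Proof.
  induction n as [| n IH]; simpl.
  - apply steps_nil.
  - apply (steps_cat _ _ _ _ _ IH), steps_one, st_suc.
Qed.

Lemma steps_seq' (t : term) (r : astack) (sg : clos) :
  steps (Ind 0 r sg) (seq' t) (Tm t (binders_needed t) r sg).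
Proof.
  revert r; induction t as [n | t IHt s IHs | t IHt]; intros r; simpl.
  - apply (steps_cat _ _ _ _ _ (steps_seq_int n r sg)), steps_one, st_fvar.
  - apply (steps_cat _ _ _ _ _ (IHt r)).
    apply (steps_cons _ _ _ _ _ (st_appfun _ _ _ _)).
    apply (steps_cat _ _ _ _ _ (IHs _)), steps_one, st_fapp.
  - apply (steps_cat _ _ _ _ _ (IHt r)), steps_one.
    destruct (binders_needed t); [apply st_lam0 | apply st_lamS].
Qed.

Theorem lemma5p5 : forall (t' t : term) (e : env),
  closed t' ->
  steps (Ind 0 [] (Clos t e)) (seqF t') (Ev t (Clos t' [] :: e) []).
Proof.
  intros t' t e Hclosed; unfold seqF.
  apply (steps_cat _ _ _ _ _ (steps_seq' t' [] (Clos t e))).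
  rewrite (closed_binders_needed t' Hclosed).
  apply steps_one, st_done.
Qed.
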